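(* Let $k$ be a field and $A\in\operatorname{Mat}_{n\times n}(k)$ with index $i(A)=r\ge 1$. For $i\in\{1,\dots,r\}$ put $\nu_i(A)=n-\operatorname{rk}(A^i)$. Let $A\{GD\}$ be the set of G-Drazin inverses of $A$. Then there exists a bijection $$k^{\nu_1(A)\cdot\nu_r(A)}\times k^{\nu_r(A)-\nu_1(A)}\times k^{[\nu_1(A)-1][\nu_r(A)-\nu_1(A)]}\;\longrightarrow\;A\{GD\}.$$
   Context: The index $i(A)$ of a square matrix $A$ is the smallest integer $r\ge 0$ such that $\operatorname{rk}(A^{r})=\operatorname{rk}(A^{r+1})$. A matrix $X\in\operatorname{Mat}_{n\times n}(k)$ is a G-Drazin inverse of $A$ (with $r=i(A)$) if $AXA=A$ and $XA^{r}=A^{r}X$. *)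

From HB Require Import structures.
From mathcomp Require Import all_boot all_order all_algebra.
Set Implicit Arguments. Unset Strict Implicit. Unset Printing Implicit Defensive.
Import GRing.Theory.
Local Open Scope ring_scope.

Definition is_index (k : fieldType) (n : nat) (A : 'M[k]_n) (r : nat) : Prop :=
  \rank (A ^+ r) = \rank (A ^+ r.+1) /\
  (forall s : nat, (s < r)%N -> \rank (A ^+ s) <> \rank (A ^+ s.+1)).

Definition nu (k : fieldType) (n : nat) (A : 'M[k]_n) (i : nat) : nat :=
  (n - \rank (A ^+ i))%N.

Definition is_GDrazin (k : fieldType) (n : nat) (A : 'M[k]_n) (r : nat)
  (X : 'M[k]_n) : bool :=
  (A *m X *m A == A) && (X *m A ^+ r == A ^+ r *m X).

From HB Require Import structures.
From mathcomp Require Import all_boot all_order all_algebra.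
From mathcomp Require Import zify.
Set Implicit Arguments. Unset Strict Implicit. Unset Printing Implicit Defensive.
Import GRing.Theory.
Local Open Scope ring_scope.

(* Since rk(A^r) = rk(A^(r+1)), the space splits as the image of A^r plus its
   kernel (Fitting decomposition), so A is similar to diag(C, N) with C
   invertible and N^r = 0.  Commuting with A^r ~ diag(C^r, 0) forces a
   G-Drazin inverse X to be block diagonal, and AXA = A then pins it down to
   X ~ diag(C^-1, Y) with NYN = N.  Writing N = L pid(rho) U with L, U
   invertible and rho = rk N, the solutions Y correspond to the block
   matrices [[1, *], [*, *]], i.e. to k^(rho q + q rho + q q) with
   q = p - rho = nu_1(A) and p = nu_r(A), a space of dimension q (p + rho). *)

Definition parametrizes (U T : Type) (g : U -> T) (P : T -> Prop) :=
  injective g /\ forall x, P x <-> exists u, g u = x.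

Section Parametrizations.
Variables (U T T' : Type).

Lemma parametrizes_comp (g : U -> T) (phi : T -> T') (P : T -> Prop) (P' : T' -> Prop) :
  injective phi -> (forall x, P' x <-> exists2 y, P y & phi y = x) ->
  parametrizes g P -> parametrizes (phi \o g) P'.
Proof.
move=> phi_inj phiP [g_inj gP]; split; first exact: inj_comp.
move=> x; rewrite phiP; split=> [[y /gP [u <-] <-]|[u <-]]; first by exists u.
by exists (g u) => //; apply/gP; exists u.
Qed.

Lemma parametrizes_transport (g : U -> T) (phi : T -> T') (psi : T' -> T)
    (P : T -> Prop) (P' : T' -> Prop) :
  cancel phi psi -> cancel psi phi -> (forall y, P' (phi y) <-> P y) ->
  parametrizes g P -> parametrizes (phi \o g) P'.
Proof.
move=> phiK psiK phiP; apply: parametrizes_comp; first exact: can_inj phiK.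
move=> x; split=> [P'x|[y Py <-]]; last exact/phiP.
by exists (psi x); rewrite ?psiK // -phiP psiK.
Qed.

End Parametrizations.

Lemma parametrizes_sig_bij (U : choiceType) (T : eqType) (g : U -> T) (P : pred T) :
  parametrizes g P -> exists f : U -> {x | P x}, bijective f.
Proof.
move=> [g_inj gP].
have Pg u : P (g u) by apply/gP; exists u.
have gsurj (x : {x | P x}) : exists u, g u == val x.
  by case: x => x /= /gP [u <-]; exists u.
exists (fun u => exist _ (g u) (Pg u)), (fun x => xchoose (gsurj x)).
  by move=> u; apply: g_inj; apply/eqP; apply: (xchooseP (gsurj _)).
by move=> x; apply: val_inj; apply/eqP; apply: (xchooseP (gsurj x)).
Qed.

Section RowTriples.
Variable k : fieldType.

Definition row_mx3 a b c (t : 'rV[k]_a * 'rV[k]_b * 'rV[k]_c) : 'rV[k]_(a + b + c) :=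
  row_mx (row_mx t.1.1 t.1.2) t.2.

Definition row_mx3_inv a b c (v : 'rV[k]_(a + b + c)) : 'rV[k]_a * 'rV[k]_b * 'rV[k]_c :=
  (lsubmx (lsubmx v), rsubmx (lsubmx v), rsubmx v).

Lemma row_mx3K a b c : cancel (@row_mx3 a b c) (@row_mx3_inv a b c).
Proof. by case=> [[x y] z]; rewrite /row_mx3 /row_mx3_inv /= !row_mxKl !row_mxKr. Qed.

Lemma row_mx3_invK a b c : cancel (@row_mx3_inv a b c) (@row_mx3 a b c).
Proof. by move=> v; rewrite /row_mx3 /row_mx3_inv /= !hsubmxK. Qed.

Lemma row_triple_bij a b c a' b' c' : (a + b + c = a' + b' + c')%N ->
  exists h : 'rV[k]_a * 'rV[k]_b * 'rV[k]_c -> 'rV[k]_a' * 'rV[k]_b' * 'rV[k]_c',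
    bijective h.
Proof.
move=> e; exists (@row_mx3_inv a' b' c' \o castmx (erefl, e) \o @row_mx3 a b c).
exists (@row_mx3_inv a b c \o castmx (erefl, esym e) \o @row_mx3 a' b' c') => t /=.
  by rewrite row_mx3_invK castmx_comp castmx_id row_mx3K.
by rewrite row_mx3_invK castmx_comp castmx_id row_mx3K.
Qed.

End RowTriples.

Section InnerInverses.
Variable k : fieldType.

Lemma pid_inner_inverse_param rho q p : (rho + q = p)%N ->
  exists g : 'rV[k]_(rho * q) * 'rV[k]_(q * rho) * 'rV[k]_(q * q) -> 'M[k]_p,
    parametrizes g (fun Z => pid_mx rho *m Z *m pid_mx rho = pid_mx rho :> 'M_p).
Proof.
case: p / => /=.
exists (fun t => block_mx 1%:M (vec_mx t.1.1) (vec_mx t.1.2) (vec_mx t.2)); split.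
  move=> [[x y] z] [[x' y'] z'] /= /eq_block_mx [_].
  by move=> /(can_inj vec_mxK) -> /(can_inj vec_mxK) -> /(can_inj vec_mxK) ->.
move=> Z; rewrite pid_mx_block -[Z]submxK !mulmx_block.
rewrite !mulmx0 !mul0mx !mulmx1 !mul1mx !addr0; split=> [/eq_block_mx [-> _ _ _]|].
  by exists (mxvec (ursubmx Z), mxvec (dlsubmx Z), mxvec (drsubmx Z)); rewrite /= !mxvecK.
by case=> [[[x y] z]] /= /eq_block_mx [<- _ _ _].
Qed.

Lemma inner_inverse_param p q (N : 'M[k]_p) : (\rank N + q = p)%N ->
  exists g : 'rV[k]_(\rank N * q) * 'rV[k]_(q * \rank N) * 'rV[k]_(q * q) -> 'M[k]_p,
    parametrizes g (fun Y => N *m Y *m N = N).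
Proof.
move=> /pid_inner_inverse_param [g gP].
pose L := col_ebase N; pose U := row_ebase N.
have unitL : L \in unitmx by apply: col_ebase_unit.
have unitU : U \in unitmx by apply: row_ebase_unit.
exists ((fun Z => invmx U *m Z *m invmx L) \o g).
apply: (parametrizes_transport (psi := fun Y => U *m Y *m L)) gP => [Z|Y|Z].
- by rewrite !mulmxA mulmxV // mul1mx mulmxKV.
- by rewrite !mulmxA mulVmx // mul1mx mulmxK.
have NE : N = L *m pid_mx (\rank N) *m U by rewrite mulmx_ebase.
have -> : N *m (invmx U *m Z *m invmx L) *m N =
          L *m (pid_mx (\rank N) *m Z *m pid_mx (\rank N)) *m U.
  by rewrite [in LHS]NE !mulmxA mulmxKV // mulmxK.
rewrite [N in _ = N]NE; split=> [|-> //].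
by move=> /(can_inj (mulmxK unitU)) /(can_inj (mulKmx unitL)).
Qed.

End InnerInverses.

Section Powers.
Variable k : fieldType.

Lemma unitmxX n (C : 'M[k]_n) j : C \in unitmx -> C ^+ j \in unitmx.
Proof.
move=> unitC; elim: j => [|j IHj]; first by rewrite expr0 unitmx1.
by rewrite exprS unitmx_mul unitC.
Qed.

Lemma exp_block_diag_mx' m p (C : 'M[k]_m) (N : 'M[k]_p) j :
  block_mx C 0 0 N ^+ j = block_mx (C ^+ j) 0 0 (N ^+ j).
Proof.
elim: j => [|j IHj]; first by rewrite !expr0 -scalar_mx_block.
by rewrite !exprS IHj [LHS]mulmx_block !mulmx0 !mul0mx !addr0 !add0r.
Qed.

Lemma conjumxM n (V f g : 'M[k]_n) : V \in unitmx ->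
  conjmx V (f *m g) = conjmx V f *m conjmx V g.
Proof. by move=> unitV; rewrite conjmxM ?inE ?stablemx_unit. Qed.

Lemma conjumxX n (V f : 'M[k]_n) j : V \in unitmx ->
  conjmx V (f ^+ j) = conjmx V f ^+ j.
Proof.
move=> unitV; elim: j => [|j IHj]; first by rewrite !expr0 conjmx_scalar ?row_free_unit.
by rewrite !exprS conjumxM // IHj.
Qed.

Lemma mxrank_conjumx n (V f : 'M[k]_n) : V \in unitmx -> \rank (conjmx V f) = \rank f.
Proof.
move=> unitV; rewrite conjumx // mxrankMfree ?row_free_unit ?unitmx_inv //.
by rewrite eqmxMfull // row_full_unit.
Qed.

End Powers.

Section GDrazin.
Variable k : fieldType.

Lemma is_GDrazin_conjmx n (V A X : 'M[k]_n) r : V \in unitmx ->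
  is_GDrazin (conjmx V A) r (conjmx V X) = is_GDrazin A r X.
Proof.
move=> unitV; have conj_inj : injective (conjmx V) := can_inj (fun f => conjmxK f unitV).
by rewrite /is_GDrazin -!conjumxX // -!conjumxM // !(inj_eq conj_inj).
Qed.

Lemma is_GDrazin_block_diag m p (C : 'M[k]_m) (N : 'M[k]_p) r (X : 'M[k]_(m + p)) :
  C \in unitmx -> N ^+ r = 0 ->
  is_GDrazin (block_mx C 0 0 N) r X <->
  exists2 Y, N *m Y *m N = N & block_mx (invmx C) 0 0 Y = X.
Proof.
move=> unitC nilN; have unitCr := unitmxX r unitC.
rewrite /is_GDrazin exp_block_diag_mx' nilN; split.
  rewrite -[X]submxK !mulmx_block !mulmx0 !mul0mx !addr0 !add0r.
  case/andP=> /eqP /eq_block_mx [CXC _ _ NYN] /eqP /eq_block_mx [_ XCr CrX _].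
  exists (drsubmx X) => //; congr block_mx.
  - apply: (can_inj (mulKmx unitC)); apply: (can_inj (mulmxK unitC)) => /=.
    by rewrite CXC mulmxV // mul1mx.
  - by rewrite -[RHS](mulKmx unitCr) -XCr mulmx0.
  - by rewrite -[RHS](mulmxK unitCr) CrX mul0mx.
case=> Y NYN <-; rewrite !mulmx_block !mulmx0 !mul0mx !addr0 !add0r NYN.
have commC : GRing.comm (invmx C) C by rewrite /GRing.comm -!mulmxE mulVmx ?mulmxV.
by rewrite mulmxV // mul1mx !mul0mx mulmxE (commrX r commC) -mulmxE !eqxx.
Qed.

Lemma GDrazin_conj_block_diag_param m p (C : 'M[k]_m) (N : 'M[k]_p)
    (V : 'M[k]_(m + p)) r :
  C \in unitmx -> N ^+ r = 0 -> V \in unitmx ->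
  exists g : 'rV[k]_(\rank N * (p - \rank N)) * 'rV[k]_((p - \rank N) * \rank N)
             * 'rV[k]_((p - \rank N) * (p - \rank N)) -> 'M[k]_(m + p),
    parametrizes g (is_GDrazin (conjmx V (block_mx C 0 0 N)) r).
Proof.
move=> unitC nilN unitV.
have [g gP] := inner_inverse_param (subnKC (rank_leq_row N)).
exists (conjmx V \o ((fun Y => block_mx (invmx C) 0 0 Y) \o g)).
apply: (parametrizes_transport (psi := conjmx (invmx V))
          (P := is_GDrazin (block_mx C 0 0 N) r)) => [f|f|X|].
- exact: conjmxK.
- exact: conjmxVK.
- by rewrite is_GDrazin_conjmx.
apply: parametrizes_comp gP => [Y1 Y2 /eq_block_mx [] //|X].
exact: is_GDrazin_block_diag.
Qed.

End GDrazin.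

Section Fitting.
Variable k : fieldType.

Lemma eqmx_mulmxX m n (V : 'M[k]_(m, n)) (A : 'M[k]_n) j :
  (V *m A :=: V)%MS -> (V *m A ^+ j :=: V)%MS.
Proof.
move=> VA; elim: j => [|j IHj]; first by rewrite expr0 mulmx1.
by rewrite exprSr mulmxA; apply: eqmx_trans (eqmxMr A IHj) VA.
Qed.

Lemma capmx_kermx_eq0 n (R : 'M[k]_n) :
  \rank (R *m R) = \rank R -> (R :&: kermx R)%MS = 0.
Proof.
move=> rkRR; have kerR_RR : (kermx R <= kermx (R *m R))%MS.
  by apply/sub_kermxP; rewrite mulmxA mulmx_ker mul0mx.
have /andP [_ kerRR_R] : (kermx R == kermx (R *m R))%MS.
  by rewrite -(mxrank_leqif_eq kerR_RR).2 !mxrank_ker rkRR.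
apply/eqP/rowV0P => v; rewrite sub_capmx => /andP [/submxP [w ->] /sub_kermxP].
rewrite -mulmxA => /sub_kermxP wRR0.
exact/sub_kermxP/(submx_trans wRR0 kerRR_R).
Qed.

Lemma row_base_mul_restrictmx m n (V : 'M[k]_(m, n)) (A : 'M[k]_n) :
  stablemx V A -> row_base V *m A = restrictmx V A *m row_base V.
Proof. by move=> VA; rewrite mulmxKpV // stablemx_row_base. Qed.

Lemma row_base_mul_restrictmxX m n (V : 'M[k]_(m, n)) (A : 'M[k]_n) j :
  stablemx V A -> row_base V *m A ^+ j = restrictmx V A ^+ j *m row_base V.
Proof.
move=> VA; elim: j => [|j IHj]; first by rewrite !expr0 mulmx1 mul1mx.
by rewrite !exprSr mulmxA IHj -mulmxA row_base_mul_restrictmx // mulmxA.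
Qed.

Lemma restrictmx_unit m n (V : 'M[k]_(m, n)) (A : 'M[k]_n) :
  (V *m A :=: V)%MS -> restrictmx V A \in unitmx.
Proof.
move=> VA; have stableVA : stablemx V A by rewrite VA.
rewrite -row_full_unit /row_full eqn_leq rank_leq_col /=.
have := mxrankM_maxl (restrictmx V A) (row_base V).
by rewrite -row_base_mul_restrictmx // (eqmxMr A (eq_row_base V)) VA.
Qed.

Lemma restrictmxX_eq0 m n (V : 'M[k]_(m, n)) (A : 'M[k]_n) r :
  stablemx V A -> V *m A ^+ r = 0 -> restrictmx V A ^+ r = 0.
Proof.
move=> VA VAr0; apply: (row_free_inj (row_base_free V)).
rewrite -row_base_mul_restrictmxX // mul0mx; apply/eqP; rewrite -submx0.
by rewrite (eqmxMr _ (eq_row_base V)) VAr0 sub0mx.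
Qed.

Lemma row_free_col_row_base m1 m2 n (V : 'M[k]_(m1, n)) (W : 'M[k]_(m2, n)) :
  (V :&: W = 0)%MS -> row_free (col_mx (row_base V) (row_base W)).
Proof.
move=> VW0; rewrite /row_free -addsmxE.
by rewrite (adds_eqmx (eq_row_base V) (eq_row_base W)) mxrank_disjoint_sum.
Qed.

Lemma col_row_base_block_diag m1 m2 n (V : 'M[k]_(m1, n)) (W : 'M[k]_(m2, n))
    (A : 'M[k]_n) :
  stablemx V A -> stablemx W A ->
  col_mx (row_base V) (row_base W) *m A =
  block_mx (restrictmx V A) 0 0 (restrictmx W A) *m col_mx (row_base V) (row_base W).
Proof.
move=> VA WA; rewrite mul_col_mx mul_block_col !mul0mx addr0 add0r.
by rewrite !row_base_mul_restrictmx.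
Qed.

Lemma fitting_decomposition n (A : 'M[k]_n) r : \rank (A ^+ r) = \rank (A ^+ r.+1) ->
  exists m p (e : (m + p = n)%N) (Q : 'M[k]_(m + p, n)) (C : 'M[k]_m) (N : 'M[k]_p),
    [/\ row_free Q, C \in unitmx, N ^+ r = 0 & Q *m A = block_mx C 0 0 N *m Q].
Proof.
move=> rkAr; set R := A ^+ r.
have AR : A *m R = R *m A by rewrite mulmxE -exprS -exprSr.
have RAR : (R *m A :=: R)%MS.
  apply/eqmxP; rewrite -(mxrank_leqif_eq _).2 -AR ?submxMl //.
  by rewrite mulmxE -exprS -rkAr.
have stableR : stablemx R A by rewrite RAR.
have stable_kerR : stablemx (kermx R) A.
  by apply/sub_kermxP; rewrite -mulmxA AR mulmxA mulmx_ker mul0mx.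
have capR0 : (R :&: kermx R = 0)%MS.
  by apply: capmx_kermx_eq0; rewrite (eqmx_mulmxX r RAR).
have rkRkerR : (\rank R + \rank (kermx R) = n)%N.
  by rewrite mxrank_ker subnKC // rank_leq_row.
exists (\rank R), (\rank (kermx R)), rkRkerR, (col_mx (row_base R) (row_base (kermx R))).
exists (restrictmx R A), (restrictmx (kermx R) A); split.
- exact: row_free_col_row_base.
- exact: restrictmx_unit.
- by apply: restrictmxX_eq0; rewrite // mulmx_ker.
- exact: col_row_base_block_diag.
Qed.

End Fitting.

Unset Implicit Arguments. Set Strict Implicit.

Theorem mainTheorem12 (k : fieldType) (n : nat) (A : 'M[k]_n) (r : nat)
  (hr : is_index A r) (hr1 : (1 <= r)%N) :
  exists f : 'rV[k]_(nu A 1 * nu A r)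
             * 'rV[k]_(nu A r - nu A 1)
             * 'rV[k]_((nu A 1 - 1) * (nu A r - nu A 1))
             -> {X : 'M[k]_n | is_GDrazin A r X},
    bijective f.
Proof.
case: hr => rkAr /(_ 0%N hr1); rewrite expr0 expr1 mxrank1 => rkA_neq.
have [m [p [e [Q [C [N [freeQ unitC nilN QA]]]]]]] := fitting_decomposition rkAr.
clear rkAr; move: A Q freeQ QA rkA_neq; case: n / e => A Q freeQ QA rkA_neq.
have unitQ : Q \in unitmx by rewrite -row_free_unit.
have unitQV : invmx Q \in unitmx by rewrite unitmx_inv.
have AE : A = conjmx (invmx Q) (block_mx C 0 0 N).
  by rewrite conjVmx // -mulmxA -QA mulKmx.
have rkAX j : \rank (A ^+ j) = (m + \rank (N ^+ j))%N.
  rewrite AE -conjumxX // mxrank_conjumx //.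
  by rewrite exp_block_diag_mx' rank_diag_block_mx mxrank_unit ?unitmxX.
have rkN_lt : (\rank N < p)%N.
  by move: rkA_neq (rank_leq_row N); rewrite -(expr1 A) rkAX expr1; lia.
rewrite /nu !rkAX expr1 nilN mxrank0 addn0 subnDl addKn.
have [g] := GDrazin_conj_block_diag_param unitC nilN unitQV.
rewrite -AE => /parametrizes_sig_bij [f fbij].
set rho := \rank N in rkN_lt; set q := (p - rho)%N.
have dims : (q * p + (p - q) + (q - 1) * (p - q) = rho * q + q * rho + q * q)%N.
  by rewrite /q; nia.
have [h hbij] := row_triple_bij k dims.
by exists (f \o h); apply: bij_comp.
Qed.
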